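(* Fix an integer $k\ge 2$. For all but $O_k(N^{k-1})$ choices of positive integers $n_1<\cdots<n_k\le N$, the following holds for $F(x)=1+x^{n_1}+\cdots+x^{n_k}$: if $G(x)$ is any $0,1$-polynomial with the same number of terms as $F(x)$ (namely $k+1$) satisfying $F(x)\tilde F(x)=G(x)\tilde G(x)$, then $G(x)\in\{F(x),\tilde F(x)\}$.
   Context: A $0,1$-polynomial is a polynomial each of whose coefficients is $0$ or $1$. For nonzero $f(x)\in\mathbb{R}[x]$, $\tilde f(x)=x^{\deg f}f(1/x)$. The implied constant depends only on $k$. *)

From mathcomp Require Import all_boot all_order all_algebra.
Set Implicit Arguments. Unset Strict Implicit. Unset Printing Implicit Defensive.
Import Order.TTheory GRing.Theory Num.Theory.
Local Open Scope ring_scope.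

Definition zero_one_poly (p : {poly int}) : bool :=
  all (fun c => (c == 0) || (c == 1)) (polyseq p).

Definition nterms (p : {poly int}) : nat := count (fun c => c != 0) (polyseq p).

(* reciprocal polynomial  ~f(x) = x^{deg f} f(1/x)  (deg f = size f - 1) *)
Definition recip (p : {poly int}) : {poly int} :=
  \poly_(i < size p) p`_((size p).-1 - i).

Definition admissible (k N : nat) (t : {ffun 'I_k -> 'I_N.+1}) : Prop :=
  (forall i : 'I_k, (0 < t i)%N) /\
  (forall i j : 'I_k, (i < j)%N -> (t i < t j)%N).

Definition Fpoly (k N : nat) (t : {ffun 'I_k -> 'I_N.+1}) : {poly int} :=
  1 + \sum_(i < k) 'X^(t i).

Definition good (k N : nat) (t : {ffun 'I_k -> 'I_N.+1}) : Prop :=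
  forall G : {poly int},
    zero_one_poly G -> nterms G = k.+1 ->
    Fpoly t * recip (Fpoly t) = G * recip G ->
    G = Fpoly t \/ G = recip (Fpoly t).

From mathcomp Require Import all_boot all_order all_algebra.
From mathcomp Require Import zify.
Set Implicit Arguments. Unset Strict Implicit. Unset Printing Implicit Defensive.
Import Order.TTheory GRing.Theory Num.Theory.
Local Open Scope ring_scope.

(* Call the exponents generic if they satisfy no relation sum_i d_i n_i = 0
   with 0 < max_i |d_i| <= 3. The other tuples lie on at most 7^k hyperplanes,
   each containing at most (N+1)^(k-1) tuples, so it suffices to treat generic
   exponents. Write F = sum_(i <= k) x^(a_i) with a_0 = 0. If F ~F = G ~G for a
   0,1-polynomial G, then G(0) <> 0, deg G = deg F, and every difference of two
   exponents of G is some a_i - a_j, because the corresponding coefficient of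
   G ~G is positive. If b = a_i - a_j and b' = a_i' - a_j' are nonzero
   exponents of G and b - b' = a_u - a_v, then a_i + a_j' + a_v = a_j + a_i' + a_u,
   so genericity gives {i, j', v} = {j, i', u} as multisets: the two
   representations share their first or their second index. Hence all
   exponents of G are a_i - a_j with one index fixed, and since G has k + 1
   terms that index is k (and G = ~F) or 0 (and G = F). *)

Lemma coef_lt_size (R : nzSemiRingType) {p : {poly R}} {i : nat} : p`_i != 0 -> (i < size p)%N.
Proof. by apply: contraR; rewrite -leqNgt => /(nth_default 0) ->. Qed.

Lemma coefM_neq0 (R : nzSemiRingType) (p q : {poly R}) m : (p * q)`_m != 0 ->
  exists i j, [/\ p`_i != 0, q`_j != 0 & (i + j = m)%N].
Proof.
rewrite coefM => nz.
have [l] : exists l : 'I_m.+1, p`_l * q`_(m - l) != 0.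
  apply/existsP; apply: contraNT nz; rewrite negb_exists => /forallP zero.
  by rewrite big1 // => l _; apply/eqP; rewrite -[_ == 0]negbK zero.
have [-> | pl] := eqVneq p`_l 0; first by rewrite mul0r eqxx.
have [-> | ql] := eqVneq q`_(m - l) 0; first by rewrite mulr0 eqxx.
by exists l, (m - l)%N; split; rewrite // subnKC // -ltnS.
Qed.

Lemma coefM_gt0 (R : numDomainType) (p q : {poly R}) i j :
  (forall l, 0 <= p`_l) -> (forall l, 0 <= q`_l) -> 0 < p`_i -> 0 < q`_j ->
  0 < (p * q)`_(i + j).
Proof.
move=> p_ge0 q_ge0 pi_gt0 qj_gt0.
have i_lt : (i < (i + j).+1)%N by rewrite ltnS leq_addr.
rewrite coefM (bigD1 (Ordinal i_lt)) //= addKn.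
apply: (lt_le_trans (mulr_gt0 pi_gt0 qj_gt0)); rewrite lerDl.
by apply: sumr_ge0 => l _; apply: mulr_ge0.
Qed.

Lemma zero_one_polyP (p : {poly int}) :
  reflect (forall i, p`_i = 0 \/ p`_i = 1) (zero_one_poly p).
Proof.
apply: (iffP allP) => [zo i | zo c /(nthP 0) [i _ <-]].
  have [lt | le] := ltnP i (size p); last by left; rewrite nth_default.
  by have /zo /orP[/eqP-> | /eqP->] := mem_nth 0 lt; [left | right].
by case: (zo i) => ->; rewrite eqxx ?orbT.
Qed.

Lemma zero_one_coef (p : {poly int}) i : zero_one_poly p -> p`_i = (p`_i != 0)%:R.
Proof. by move=> /zero_one_polyP /(_ i) [] ->. Qed.

Lemma zero_one_coef_ge0 (p : {poly int}) i : zero_one_poly p -> 0 <= p`_i.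
Proof. by move=> zo; rewrite (zero_one_coef i zo). Qed.

Lemma zero_one_poly_eq (p q : {poly int}) : zero_one_poly p -> zero_one_poly q ->
  (forall i, (p`_i != 0) = (q`_i != 0)) -> p = q.
Proof.
move=> zp zq supp_pq; apply/polyP => i.
by rewrite (zero_one_coef i zp) (zero_one_coef i zq) supp_pq.
Qed.

Lemma coef_recip (p : {poly int}) i :
  (recip p)`_i = if (i < size p)%N then p`_((size p).-1 - i) else 0.
Proof. by rewrite /recip coef_poly. Qed.

Lemma coef0_recip (p : {poly int}) : (recip p)`_0 = lead_coef p.
Proof.
rewrite coef_recip subn0 lead_coefE; case: ltnP => // p_le0.
by rewrite nth_default // (leq_trans p_le0).
Qed.

Lemma zero_one_recip (p : {poly int}) : zero_one_poly p -> zero_one_poly (recip p).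
Proof.
move=> /zero_one_polyP zo; apply/zero_one_polyP => i.
by rewrite coef_recip; case: ifP => _; [apply: zo | left].
Qed.

Lemma size_recip (p : {poly int}) : p`_0 != 0 -> size (recip p) = size p.
Proof. by move=> p0; rewrite /recip size_poly_eq // subnn. Qed.

Lemma size_mul_recip (p : {poly int}) : p`_0 != 0 -> size (p * recip p) = (size p).*2.-1.
Proof.
move=> p0; have p_neq0 : p != 0 by apply: contraNneq p0 => ->; rewrite coef0.
have rp_neq0 : recip p != 0 by rewrite -size_poly_gt0 size_recip // size_poly_gt0.
by rewrite size_mul // size_recip // addnn.
Qed.

Lemma mul_recip_coef0 (f g : {poly int}) : f`_0 != 0 -> f * recip f = g * recip g ->
  g`_0 != 0.
Proof.
move=> f0 /(congr1 (fun p : {poly int} => p`_0)); rewrite /= !coef0M !coef0_recip.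
apply: contra_eqN => /eqP ->; rewrite mul0r mulf_neq0 // lead_coef_eq0.
by apply: contraNneq f0 => ->; rewrite coef0.
Qed.

Lemma mul_recip_size (f g : {poly int}) : f`_0 != 0 -> f * recip f = g * recip g ->
  size g = size f.
Proof.
move=> f0 fg; have g0 := mul_recip_coef0 f0 fg.
have := congr1 (fun p : {poly int} => size p) fg; rewrite !size_mul_recip //.
have : (0 < size f)%N by rewrite size_poly_gt0; apply: contraNneq f0 => ->; rewrite coef0.
have : (0 < size g)%N by rewrite size_poly_gt0; apply: contraNneq g0 => ->; rewrite coef0.
lia.
Qed.

Definition supp (R : nzSemiRingType) (p : {poly R}) : seq nat :=
  [seq i <- iota 0 (size p) | p`_i != 0].

Lemma mem_supp (R : nzSemiRingType) (p : {poly R}) i : (i \in supp p) = (p`_i != 0).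
Proof.
by rewrite mem_filter mem_iota add0n; apply: andb_idr => /coef_lt_size ->.
Qed.

Lemma supp_uniq (R : nzSemiRingType) (p : {poly R}) : uniq (supp p).
Proof. exact/filter_uniq/iota_uniq. Qed.

Lemma size_supp (p : {poly int}) : size (supp p) = nterms p.
Proof.
by rewrite size_filter /nterms -[in RHS](mkseq_nth 0 p) /mkseq count_map.
Qed.

Lemma card_bigcup_le (I T : finType) (P : pred I) (A : I -> {set T}) :
  (#|\bigcup_(i | P i) A i| <= \sum_(i | P i) #|A i|)%N.
Proof.
elim/big_rec2: _ => [|i n X _ le_Xn]; first by rewrite cards0.
by rewrite (leq_trans (leq_card_setU _ _).1) ?leq_add2l.
Qed.

Lemma sum_count_mem (s : seq nat) n : all (fun x => x < n)%N s ->
  (\sum_(x < n) count_mem (x : nat) s)%N = size s.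
Proof.
elim: s => [|y s IHs] /=; first by rewrite big1.
case/andP=> y_lt /IHs <-; rewrite big_split /=.
by rewrite (bigD1 (Ordinal y_lt)) //= eqxx big1 // => x /negbTE; rewrite -val_eqE eq_sym => ->.
Qed.

Lemma perm3_common (i j i' j' u v : nat) : i != j -> i' != j' ->
  perm_eq [:: i; j'; v] [:: j; i'; u] -> i = i' \/ j = j'.
Proof.
move=> ij i'j' perm_ijv.
have : i \in [:: j; i'; u] by rewrite -(perm_mem perm_ijv) mem_head.
rewrite !inE (negbTE ij) /= => /orP[/eqP ii' | /eqP iu]; first by left.
move: perm_ijv; rewrite -iu -[[:: j; i'; i]]/(rcons [:: j; i'] i).
rewrite perm_sym perm_rcons perm_cons perm_sym.
move=> /perm_mem /(_ j'); rewrite !inE eqxx (eq_sym j' i') (negbTE i'j') orbF.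
by move=> /esym /eqP; right.
Qed.

Section Exponents.
Variables (k N : nat) (t : {ffun 'I_k -> 'I_N.+1}).

Definition exps : seq nat := 0%N :: [seq val (t i) | i <- enum 'I_k].
Local Notation a := (nth 0%N exps).
Local Notation F := (Fpoly t).

Lemma size_exps : size exps = k.+1.
Proof. by rewrite /= size_map size_enum_ord. Qed.

Lemma nth_exps_succ m (m_lt : (m < k)%N) : a m.+1 = t (Ordinal m_lt).
Proof.
rewrite /= (nth_map (Ordinal m_lt)) ?size_enum_ord //.
by rewrite -[m]/(Ordinal m_lt : nat) nth_ord_enum.
Qed.

Lemma mem_expsP x : reflect (exists2 j, (j <= k)%N & x = a j) (x \in exps).
Proof.
apply: (iffP (nthP 0%N)); rewrite size_exps.
  by case=> j j_le <-; exists j.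
by case=> j j_le ->; exists j.
Qed.

Lemma sum_exps_count (s : seq nat) : all (fun x => x <= k)%N s ->
  \sum_(x <- s) (a x : int) = \sum_(m < k) (count_mem m.+1 s : int) * (t m : int).
Proof.
have a_sum x : (x <= k)%N ->
    (a x : int) = \sum_(m < k) ((x == m.+1 : nat) : int) * (t m : int).
  case: x => [_ | x x_lt]; first by rewrite big1 // => m _; rewrite mul0r.
  rewrite (nth_exps_succ x_lt) (bigD1 (Ordinal x_lt)) //= eqxx mul1r big1 ?addr0 //.
  by move=> m; rewrite -val_eqE eqSS eq_sym /= => /negbTE ->; rewrite mul0r.
elim: s => [|x s IHs] /=; first by rewrite big_nil big1 // => m _; rewrite mul0r.
case/andP=> x_le /IHs; rewrite big_cons => ->; rewrite (a_sum x x_le) -big_split /=.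
by apply: eq_bigr => m _; rewrite PoszD mulrDl eq_sym.
Qed.

Definition generic : Prop := forall d : 'I_k -> int, (forall m, `|d m| <= 3) ->
  \sum_(m < k) d m * (t m : int) = 0 -> forall m, d m = 0.

Lemma generic_perm (s1 s2 : seq nat) : generic ->
  size s1 = size s2 -> (size s1 <= 3)%N ->
  all (fun x => x <= k)%N s1 -> all (fun x => x <= k)%N s2 ->
  \sum_(x <- s1) (a x : int) = \sum_(x <- s2) (a x : int) -> perm_eq s1 s2.
Proof.
move=> gen sz12 sz1 s1_le s2_le sum12.
have count_succ (m : 'I_k) : count_mem m.+1 s1 = count_mem m.+1 s2.
  suff /eqP : (count_mem m.+1 s1 : int) - (count_mem m.+1 s2 : int) = 0 by lia.
  apply: (gen (fun m : 'I_k => (count_mem m.+1 s1 : int) - (count_mem m.+1 s2 : int))).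
    move=> i; have c1 : (count_mem i.+1 s1 <= size s1)%N := count_size _ _.
    have c2 : (count_mem i.+1 s2 <= size s2)%N := count_size _ _.
    lia.
  under eq_bigr do rewrite mulrBl.
  by rewrite sumrB -!sum_exps_count // sum12 subrr.
have count_gt x : (k < x)%N -> forall s, all (fun x => x <= k)%N s -> count_mem x s = 0%N.
  move=> k_lt s /allP s_le; apply/count_memPn; apply: contraTN k_lt => /s_le.
  by rewrite leqNgt.
apply/allP => x _; apply/eqP; case: x => [|x].
  have := @sum_count_mem s1 k.+1 s1_le.
  rewrite sz12 -(@sum_count_mem s2 k.+1 s2_le) !big_ord_recl /=.
  by under eq_bigr do rewrite count_succ; move/addIn.
have [x_lt | k_le] := ltnP x k; first exact: (count_succ (Ordinal x_lt)).
by rewrite !count_gt.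
Qed.

Hypothesis adm : admissible t.

Lemma nth_exps_lt i j : (i < j)%N -> (j <= k)%N -> (a i < a j)%N.
Proof.
case: adm => t_gt0 t_lt; case: j => [//|j] ij j_lt.
rewrite (nth_exps_succ j_lt); case: i ij => [_|i ij]; first exact: t_gt0.
by rewrite ltnS in ij; rewrite (nth_exps_succ (ltn_trans ij j_lt)); apply: t_lt.
Qed.

Lemma nth_exps_le i j : (i <= j)%N -> (j <= k)%N -> (a i <= a j)%N.
Proof. by rewrite leq_eqVlt => /predU1P[-> // | ij j_le]; exact/ltnW/nth_exps_lt. Qed.

Lemma exps_uniq : uniq exps.
Proof.
apply/(uniqP 0%N) => i j; rewrite !inE size_exps !ltnS => i_le j_le aij.
case: (ltngtP i j) => [ij | ji | //].
  by have := nth_exps_lt ij j_le; rewrite aij ltnn.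
by have := nth_exps_lt ji i_le; rewrite aij ltnn.
Qed.

Lemma Fpoly_exps : F = \sum_(x <- exps) 'X^x.
Proof. by rewrite /Fpoly big_cons expr0 big_map big_enum. Qed.

Lemma coefF x : F`_x = (x \in exps)%:R.
Proof.
rewrite Fpoly_exps coef_sum; under eq_bigr do rewrite coefXn eq_sym.
rewrite -natr_sum -(count_uniq_mem _ exps_uniq) -sum1_count.
by congr _%:R; rewrite [RHS]big_mkcond; apply: eq_bigr => y _ /=; case: eqP.
Qed.

Lemma coefF_neq0 x : (F`_x != 0) = (x \in exps).
Proof. by rewrite coefF; case: (_ \in _); rewrite ?oner_eq0 ?eqxx. Qed.

Lemma zero_one_F : zero_one_poly F.
Proof. by apply/zero_one_polyP => x; rewrite coefF; case: (_ \in _); [right | left]. Qed.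

Lemma size_F : size F = (a k).+1.
Proof.
apply/eqP; rewrite eqn_leq; apply/andP; split.
  apply/leq_sizeP => j; rewrite ltnNge => /negP j_gt; apply/eqP.
  rewrite -[_ == 0]negbK coefF_neq0; apply/negP => /mem_expsP [i i_le aij].
  by apply: j_gt; rewrite aij nth_exps_le.
by apply: coef_lt_size; rewrite coefF_neq0; apply/mem_expsP; exists k.
Qed.

Lemma coef_recipF_neq0 x : ((recip F)`_x != 0) = (x <= a k)%N && ((a k - x)%N \in exps).
Proof.
by rewrite coef_recip size_F ltnS; case: (x <= a k)%N => /=; rewrite ?coefF_neq0 ?eqxx.
Qed.

Lemma coefF0 : F`_0 != 0.
Proof. by rewrite coefF_neq0 mem_head. Qed.

Definition exps_diff b i j : Prop := [/\ (i <= k)%N, (j <= k)%N & (b + a j = a i)%N].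

Section Factor.
Variables (G : {poly int}) (zoG : zero_one_poly G) (ntG : nterms G = k.+1).
Hypothesis eqG : F * recip F = G * recip G.

(* The coefficient of x^(p + deg F - q) in G ~G is positive, hence so is the
   one in F ~F, which is a sum of products of coefficients of F and ~F. *)
Lemma supp_diff p q : G`_p != 0 -> G`_q != 0 ->
  exists i j, [/\ (i <= k)%N, (j <= k)%N & (p + a j = a i + q)%N].
Proof.
move=> Gp Gq; have size_G := mul_recip_size coefF0 eqG.
have q_le : (q <= a k)%N by rewrite -ltnS -size_F -size_G coef_lt_size.
have : 0 < (G * recip G)`_(p + (a k - q)).
  apply: coefM_gt0 => [l | l | |]; rewrite ?zero_one_coef_ge0 ?zero_one_recip //.
    by rewrite (zero_one_coef p zoG) Gp ltr01.
  rewrite coef_recip size_G size_F ltnS leq_subr subKn //.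
  by rewrite (zero_one_coef q zoG) Gq ltr01.
rewrite -eqG => /gt_eqF /negbT /coefM_neq0 [l [l' [Fl rFl' ll']]].
move: Fl rFl'; rewrite coefF_neq0 coef_recipF_neq0.
case/mem_expsP=> i i_le ai /andP [l'_le /mem_expsP [j j_le aj]].
by exists i, j; split=> //; lia.
Qed.

Lemma supp_exps_diff b : G`_b != 0 -> exists i j, exps_diff b i j.
Proof.
have G0 := mul_recip_coef0 coefF0 eqG.
move=> Gb; have [i [j [i_le j_le e]]] := supp_diff Gb G0.
by exists i, j; split; rewrite ?e ?addn0.
Qed.

Hypothesis gen : generic.

Lemma exps_diff_shared b b' i j i' j' : G`_b != 0 -> G`_b' != 0 ->
  (0 < b)%N -> (0 < b')%N -> exps_diff b i j -> exps_diff b' i' j' -> i = i' \/ j = j'.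
Proof.
move=> Gb Gb' b_gt0 b'_gt0 [i_le j_le bij] [i'_le j'_le bij'].
have [u [v [u_le v_le buv]]] := supp_diff Gb Gb'.
apply: (@perm3_common _ _ _ _ u v).
- by apply/eqP => ij; move: bij; rewrite ij; lia.
- by apply/eqP => ij; move: bij'; rewrite ij; lia.
apply: generic_perm; rewrite //= ?i_le ?j_le ?i'_le ?j'_le ?u_le ?v_le //.
by rewrite !big_cons !big_nil; lia.
Qed.

Lemma supp_common_first b1 b2 i j1 j2 : b1 != b2 -> G`_b1 != 0 -> G`_b2 != 0 ->
  (0 < b1)%N -> (0 < b2)%N -> exps_diff b1 i j1 -> exps_diff b2 i j2 ->
  forall b, G`_b != 0 -> exists j, exps_diff b i j.
Proof.
move=> b12 Gb1 Gb2 b1_gt0 b2_gt0 d1 d2 b Gb.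
have [-> | b_gt0] := posnP b; first by case: d1 => i_le _ _; exists i.
have [i' [j' d]] := supp_exps_diff Gb.
have [-> | j1j'] := exps_diff_shared Gb1 Gb b1_gt0 b_gt0 d1 d; first by exists j'.
have [-> | j2j'] := exps_diff_shared Gb2 Gb b2_gt0 b_gt0 d2 d; first by exists j'.
case: d1 d2 => [_ _ e1] [_ _ e2]; case/eqP: b12; subst j1 j2; lia.
Qed.

Lemma supp_common_second b1 b2 i1 i2 j : b1 != b2 -> G`_b1 != 0 -> G`_b2 != 0 ->
  (0 < b1)%N -> (0 < b2)%N -> exps_diff b1 i1 j -> exps_diff b2 i2 j ->
  forall b, G`_b != 0 -> exists i, exps_diff b i j.
Proof.
move=> b12 Gb1 Gb2 b1_gt0 b2_gt0 d1 d2 b Gb.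
have [-> | b_gt0] := posnP b; first by case: d1 => _ j_le _; exists j.
have [i' [j' d]] := supp_exps_diff Gb.
have [i1i' | ->] := exps_diff_shared Gb1 Gb b1_gt0 b_gt0 d1 d; last by exists i'.
have [i2i' | ->] := exps_diff_shared Gb2 Gb b2_gt0 b_gt0 d2 d; last by exists i'.
case: d1 d2 => [_ _ e1] [_ _ e2]; case/eqP: b12; subst i1 i2; lia.
Qed.

Lemma supp_param (f : nat -> nat) :
  (forall b, G`_b != 0 -> exists2 m, (m <= k)%N & b = f m) ->
  {in [pred m | m <= k]%N &, injective f} /\ (forall m, (m <= k)%N -> G`_(f m) != 0).
Proof.
move=> param; set r := [seq f m | m <- iota 0 k.+1].
have supp_r : {subset supp G <= r}.
  move=> b; rewrite mem_supp => /param [m m_le ->].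
  by apply: map_f; rewrite mem_iota add0n ltnS.
have size_r : (size r <= size (supp G))%N by rewrite size_map size_iota size_supp ntG.
have nth_r m : (m <= k)%N -> nth 0%N r m = f m.
  by move=> m_le; rewrite (nth_map 0%N) ?nth_iota ?size_iota.
split.
  move=> m1 m2; rewrite !inE => m1_le m2_le.
  have /(uniqP 0%N) r_inj := leq_size_uniq (supp_uniq G) supp_r size_r.
  by rewrite -nth_r // -nth_r //; apply: r_inj; rewrite inE size_map size_iota ltnS.
move=> m m_le; rewrite -mem_supp (uniq_min_size (supp_uniq G) supp_r size_r).2.
by apply: map_f; rewrite mem_iota add0n ltnS.
Qed.

Lemma eq_recipF i : (i <= k)%N -> (forall b, G`_b != 0 -> exists j, exps_diff b i j) ->
  G = recip F.
Proof.
move=> i_le common.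
have param b : G`_b != 0 -> exists2 j, (j <= k)%N & b = (a i - a j)%N.
  by case/common=> j [_ j_le e]; exists j => //; lia.
have [f_inj supp_f] := supp_param param.
have ik : i = k.
  apply: f_inj; rewrite ?inE ?leqnn //= subnn.
  by apply/esym/eqP; rewrite subn_eq0 nth_exps_le.
subst i; apply: zero_one_poly_eq => // [|x]; first exact/zero_one_recip/zero_one_F.
rewrite coef_recipF_neq0; apply/idP/andP => [Gx | [x_le /mem_expsP [j j_le e]]].
  have [j j_le ->] := param _ Gx; split; first exact: leq_subr.
  by rewrite subKn ?nth_exps_le //; apply/mem_expsP; exists j.
have -> : x = (a k - a j)%N by lia.
exact: supp_f.
Qed.

Lemma eq_F j : (j <= k)%N -> (forall b, G`_b != 0 -> exists i, exps_diff b i j) -> G = F.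
Proof.
move=> j_le common.
have param b : G`_b != 0 -> exists2 i, (i <= k)%N & b = (a i - a j)%N.
  by case/common=> i [i_le _ e]; exists i => //; lia.
have [f_inj supp_f] := supp_param param.
have j0 : j = 0%N by apply: f_inj; rewrite ?inE //= subnn.
subst j; apply: zero_one_poly_eq => // [|x]; first exact: zero_one_F.
rewrite coefF_neq0; apply/idP/mem_expsP => [Gx | [i i_le ->]].
  by have [i i_le ->] := param _ Gx; exists i; rewrite ?subn0.
by have := supp_f i i_le; rewrite subn0.
Qed.

Lemma eq_F_or_recipF : (2 <= k)%N -> G = F \/ G = recip F.
Proof.
move=> k_ge2; have G0 := mul_recip_coef0 coefF0 eqG.
set B := rem 0%N (supp G).
have size_B : size B = k by rewrite size_rem ?mem_supp // size_supp ntG.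
have nth_B m : (m < k)%N -> G`_(nth 0%N B m) != 0 /\ (0 < nth 0%N B m)%N.
  move=> m_lt; have := mem_nth 0%N (_ : m < size B)%N; rewrite size_B => /(_ m_lt).
  by rewrite mem_rem_uniq ?supp_uniq // inE mem_supp lt0n => /andP[].
have b12 : nth 0%N B 0 != nth 0%N B 1.
  by rewrite nth_uniq ?rem_uniq ?supp_uniq ?size_B //; lia.
have [Gb1 b1_gt0] := nth_B 0%N (ltnW k_ge2).
have [Gb2 b2_gt0] := nth_B 1%N k_ge2.
have [i1 [j1 d1]] := supp_exps_diff Gb1.
have [i2 [j2 d2]] := supp_exps_diff Gb2.
have [i12 | j12] := exps_diff_shared Gb1 Gb2 b1_gt0 b2_gt0 d1 d2.
  subst i2; right; have [i_le _ _] := d1; apply: eq_recipF i_le _.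
  exact: supp_common_first b12 Gb1 Gb2 b1_gt0 b2_gt0 d1 d2.
subst j2; left; have [_ j_le _] := d1; apply: eq_F j_le _.
exact: supp_common_second b12 Gb1 Gb2 b1_gt0 b2_gt0 d1 d2.
Qed.

End Factor.

Lemma good_of_generic : (2 <= k)%N -> generic -> good t.
Proof.
move=> k_ge2 gen G zoG ntG eqG.
by have [->|->] := eq_F_or_recipF zoG ntG eqG gen k_ge2; [left | right].
Qed.

End Exponents.

Definition hyperplane k N (d : 'I_k -> int) : {set {ffun 'I_k -> 'I_N.+1}} :=
  [set t : {ffun 'I_k -> 'I_N.+1} | \sum_(m < k) d m * (t m : int) == 0].

Lemma card_hyperplane k N (d : 'I_k -> int) m0 : d m0 != 0 ->
  (#|hyperplane N d| <= N.+1 ^ k.-1)%N.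
Proof.
move=> d_m0; pose f (t : {ffun 'I_k -> 'I_N.+1}) : {ffun 'I_k.-1 -> 'I_N.+1} :=
  [ffun j => t (lift m0 j)].
have f_inj : {in hyperplane N d &, injective f}.
  move=> t1 t2; rewrite !inE => /eqP t1_d /eqP t2_d /ffunP f12.
  have off m : m != m0 -> t1 m = t2 m.
    by case: (unliftP m0 m) => [j -> _ | ->]; [have := f12 j; rewrite !ffunE | rewrite eqxx].
  apply/ffunP => m; have [-> | /off //] := eqVneq m m0.
  rewrite (bigD1 m0) //= in t1_d; rewrite (bigD1 m0) //= in t2_d.
  rewrite (eq_bigr (fun i => d i * (t2 i : int))) in t1_d; last by move=> i /off ->.
  have : d m0 * (t1 m0 : int) = d m0 * (t2 m0 : int).
    by apply/addIr/(etrans t1_d); rewrite t2_d.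
  by move=> /(mulfI d_m0) [] /val_inj.
rewrite -(card_in_imset f_inj); apply: leq_trans (max_card _) _.
by rewrite card_ffun !card_ord.
Qed.

Definition small_coef k (c : {ffun 'I_k -> 'I_7}) (m : 'I_k) : int := (c m : int) - 3.

Lemma generic_of_hyperplanes k N (t : {ffun 'I_k -> 'I_N.+1}) :
  (forall c, [exists m, small_coef c m != 0] -> t \notin hyperplane N (small_coef c)) ->
  generic t.
Proof.
move=> off_hyp d d_le dt m; apply/eqP/contraT => d_m.
pose c : {ffun 'I_k -> 'I_7} := [ffun m => inord (absz (d m + 3))].
have cE i : small_coef c i = d i.
  by have d_i_le := d_le i; rewrite /small_coef ffunE inordK; lia.
have c_nz : [exists m, small_coef c m != 0] by apply/existsP; exists m; rewrite cE.
case/negP: (off_hyp c c_nz); rewrite inE.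
by under eq_bigr do rewrite cE; apply/eqP.
Qed.

Local Close Scope ring_scope.

Theorem mainTheorem4 (k : nat) (hk : (2 <= k)%N) :
  exists C : nat, forall (N : nat) (S : {set {ffun 'I_k -> 'I_N.+1}}),
    (forall t, t \in S -> admissible t /\ ~ good t) ->
    (#|S| <= C * N ^ (k - 1))%N.
Proof.
exists (7 ^ k * 2 ^ (k - 1)) => N S S_bad.
case: N => [|N] in S S_bad *.
  rewrite (_ : S = set0) ?cards0 //; apply/setP => t; rewrite inE.
  by apply/negP => /S_bad [[t_gt0 _] _]; have := t_gt0 (Ordinal (ltnW hk)); case: (t _) => -[].
pose nontrivial (c : {ffun 'I_k -> 'I_7}) := [exists m, small_coef c m != 0%R].
have S_sub : S \subset \bigcup_(c | nontrivial c) hyperplane N.+1 (small_coef c).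
  apply/subsetP => t t_S; have [adm bad] := S_bad t t_S; apply/negPn/negP => t_off.
  apply/bad/good_of_generic/generic_of_hyperplanes => // c c_nz.
  by apply: contra t_off => t_in; apply/bigcupP; exists c.
apply: leq_trans (subset_leq_card S_sub) _; apply: leq_trans (card_bigcup_le _ _) _.
apply: (@leq_trans (\sum_(c : {ffun 'I_k -> 'I_7}) N.+2 ^ k.-1)).
  rewrite big_mkcond; apply: leq_sum => c _; case: ifP => // /existsP [m].
  exact: card_hyperplane.
rewrite sum_nat_const card_ffun !card_ord -mulnA leq_mul2l subn1 -expnMn leq_exp2r.
  by rewrite mulSn mul1n addSn ltnS leq_addl orbT.
by rewrite -subn1 subn_gt0.
Qed.
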